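(* Let $R$ be a local integral domain and $\mathcal O$ a valuation ring of $\mathrm{Frac}(R)$. Then the additive index $[R:\mathcal O\cap R]$ is finite if and only if $R\subseteq\mathcal O$.
   Context: Rings are commutative with identity. A valuation ring of a field $K$ is a subring $\mathcal O$ with $x\in\mathcal O$ or $x^{-1}\in\mathcal O$ for every nonzero $x\in K$. *)

From HB Require Import structures.
From mathcomp Require Import all_boot all_order all_algebra fraction.
Set Implicit Arguments. Unset Strict Implicit. Unset Printing Implicit Defensive.
Import GRing.Theory.
Local Open Scope ring_scope.

Definition is_ideal (A : comNzRingType) (I : A -> Prop) : Prop :=
  I 0 /\ (forall x y, I x -> I y -> I (x + y)) /\ (forall a x, I x -> I (a * x)).

Definition is_maximal_ideal (A : comNzRingType) (M : A -> Prop) : Prop :=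
  is_ideal M /\ ~ M 1 /\
  (forall J : A -> Prop, is_ideal J -> (forall x, M x -> J x) ->
     (forall x, J x <-> M x) \/ J 1).

Definition is_local (A : comNzRingType) : Prop :=
  exists M : A -> Prop, is_maximal_ideal M /\
    forall N : A -> Prop, is_maximal_ideal N -> forall x, N x <-> M x.

Definition is_subring (A : comNzRingType) (S : A -> Prop) : Prop :=
  S 1 /\ (forall x y, S x -> S y -> S (x - y)) /\ (forall x y, S x -> S y -> S (x * y)).

Definition is_valuation_ring (K : fieldType) (O : K -> Prop) : Prop :=
  is_subring O /\ forall x : K, x != 0 -> O x \/ O x^-1.

Definition finite_add_index (A : zmodType) (S : A -> Prop) : Prop :=
  exists s : seq A, forall r : A, exists2 t, t \in s & S (r - t).

From mathcomp Require Import all_boot all_order all_algebra fraction.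
From mathcomp Require Import ring.
From Stdlib Require Import ClassicalEpsilon.
Set Implicit Arguments. Unset Strict Implicit. Unset Printing Implicit Defensive.
Import GRing.Theory.
Local Open Scope ring_scope.

(* If R is contained in O, then O ∩ R = R has index one.
   Conversely, let the subgroup O ∩ R have finite index and let r ∈ R.
   - Pigeonhole: among the infinitely many powers r^0, r^1, r^2, ... two
     lie in the same coset of O ∩ R, i.e. r^m - r^n ∈ O for some m < n.  Writing d = x^k - 1 (n = m + k), we have
     x^m d ∈ O; if d ∈ O then x^k ∈ O, and otherwise d^-1 ∈ O and
     x^n = x^m d (1 + d^-1) ∈ O.  In both cases a positive power of x lies
     in O, and this suffices: x^(n+1) ∈ O implies x ∈ O (if x ∉ O then
     x^-1 ∈ O, and x = x^(n+1) (x^-1)^n).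
   Applying this to x = r in Frac(R) gives r ∈ O. *)

Section ValuationRing.
Variables (K : fieldType) (O : K -> Prop).
Hypothesis valO : is_valuation_ring O.

Lemma val1 : O 1. Proof. by case: valO => [[]]. Qed.

Lemma valB x y : O x -> O y -> O (x - y).
Proof. by case: valO => [[_ [subO _]] _]; apply: subO. Qed.

Lemma valM x y : O x -> O y -> O (x * y).
Proof. by case: valO => [[_ [_ mulO]] _]; apply: mulO. Qed.

Lemma val0 : O 0. Proof. by rewrite -(subrr 1); apply: valB; apply: val1. Qed.

Lemma valN x : O x -> O (- x).
Proof. by move=> Ox; rewrite -sub0r; apply: valB => //; apply: val0. Qed.

Lemma valD x y : O x -> O y -> O (x + y).
Proof. by move=> Ox Oy; rewrite -(opprK y); apply: valB => //; apply: valN. Qed.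

Lemma valX x n : O x -> O (x ^+ n).
Proof.
by move=> Ox; elim: n => [|n IHn]; [rewrite expr0; apply: val1 | rewrite exprS; apply: valM].
Qed.

Lemma val_root x n : O (x ^+ n.+1) -> O x.
Proof.
move=> Oxn; have [->|x0] := eqVneq x 0; first exact: val0.
case: valO => _ /(_ x x0) [//|Oxinv].
have -> : x = x ^+ n.+1 * x^-1 ^+ n.
  by rewrite exprS exprVn -mulrA mulfV ?mulr1 // expf_neq0.
by apply: valM => //; apply: valX.
Qed.

Lemma val_pow_sub x m n : (m < n)%N -> O (x ^+ m - x ^+ n) -> O x.
Proof.
move=> lt_mn; have [k ->] : exists k, n = (m + k.+1)%N.
  by exists (n - m.+1)%N; rewrite addnS -addSn subnKC.
rewrite exprD => Odiff; set d := x ^+ k.+1 - 1.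
have Oxmd : O (x ^+ m * d) by rewrite mulrBr mulr1 -opprB; apply: valN.
have [d0|d0] := eqVneq d 0.
  by apply: (@val_root x k); rewrite -(subrK 1 (x ^+ k.+1)) -/d d0 add0r; apply: val1.
case: valO => _ /(_ d d0) [Od|Odinv].
  by apply: (@val_root x k); rewrite -(subrK 1 (x ^+ k.+1)); apply: valD => //; apply: val1.
apply: (@val_root x (m + k)).
have -> : x ^+ (m + k).+1 = x ^+ m * d * (1 + d^-1).
  by rewrite -addnS exprD /d; field; rewrite -/d.
by apply: valM => //; apply: valD => //; apply: val1.
Qed.

End ValuationRing.

Lemma finite_index_pigeonhole (A : zmodType) (S : A -> Prop) (u : nat -> A) :
  (forall x y, S x -> S y -> S (x - y)) -> finite_add_index S ->
  exists i j, (i < j)%N /\ S (u i - u j).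
Proof.
move=> subS [s cosets].
have repr_ex i : exists t, t \in s /\ S (u i - t).
  by case: (cosets (u i)) => t; exists t.
pose g i := proj1_sig (constructive_indefinite_description _ (repr_ex i)).
have gP i : g i \in s /\ S (u i - g i).
  exact: proj2_sig (constructive_indefinite_description _ (repr_ex i)).
have same_repr i j : g i = g j -> S (u i - u j).
  move=> gij; have -> : u i - u j = (u i - g i) - (u j - g j) by rewrite gij opprB addrA subrK.
  by apply: subS; [case: (gP i) | case: (gP j)].
have g_idx i : (index (g i) s < size s)%N by rewrite index_mem; case: (gP i).
pose f (i : 'I_(size s).+1) : 'I_(size s) := Ordinal (g_idx i).
have /injectivePn [i [j neq_ij fij]] : ~~ injectiveb f.
  by apply/negP => /injectiveP /leq_card; rewrite !card_ord ltnn.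
have gij : g i = g j.
  have /(congr1 (nth 0 s)) := congr1 val fij.
  by rewrite /= !nth_index //; [case: (gP j) | case: (gP i)].
case: (ltngtP i j) => [lt_ij|lt_ji|/val_inj eq_ij]; last by rewrite eq_ij eqxx in neq_ij.
- by exists i, j; split => //; apply: same_repr.
- by exists j, i; split => //; apply: same_repr.
Qed.

Theorem mainTheorem16 (R : idomainType) (O : {fraction R} -> Prop) :
  is_local R -> is_valuation_ring O ->
  (finite_add_index (fun r : R => O (tofrac r)) <-> (forall r : R, O (tofrac r))).
Proof.
move=> _ valO; split=> [finO r|RsubO]; last first.
  by exists [:: 0] => r; exists 0; rewrite ?inE // subr0.
have subS (x y : R) : O (tofrac x) -> O (tofrac y) -> O (tofrac (x - y)).
  by rewrite rmorphB; apply: valB.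
have [m [n [lt_mn Odiff]]] := finite_index_pigeonhole (fun i => r ^+ i) subS finO.
by apply: (val_pow_sub valO lt_mn); rewrite -!rmorphXn -rmorphB.
Qed.
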